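(* Let $\rho$ be a state of $n$ finite-dimensional systems $1,\dots,n$, and let $\Sigma=\{k_1,k_2,\dots\}\subseteq\{1,\dots,n\}$ be nonempty. For each $k\in\Sigma$ let $\mathcal B_k=\{|a^{(k)}_{i}\rangle\}_i$ be an orthonormal basis of system $k$, and for multi-indices $\vec i=(i_{k_1},i_{k_2},\dots)$, $\vec j=(j_{k_1},j_{k_2},\dots)$ let $\rho_{\vec i\vec j}=\big(\langle a^{(k_1)}_{i_{k_1}}|\langle a^{(k_2)}_{i_{k_2}}|\cdots\big)\rho\big(|a^{(k_1)}_{j_{k_1}}\rangle|a^{(k_2)}_{j_{k_2}}\rangle\cdots\big)$, an operator on the systems not in $\Sigma$ (a scalar if $\Sigma=\{1,\dots,n\}$). Then $$Q^\Sigma_{\mathcal N}(\rho)=\min_{\bigotimes_{k\in\Sigma}\mathcal B_k}\frac12\Big(\sum_{\vec i,\vec j}\|\rho_{\vec i\vec j}\|_1-1\Big),$$ the minimum being over all choices of the bases $\mathcal B_k$, $k\in\Sigma$.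
   Context: $\|\cdot\|_1$ is the trace norm. Negativity of a bipartite state $\tau_{X:Y}$: $\mathcal N_{X:Y}(\tau)=(\|\tau^\Gamma\|_1-1)/2$, with $\tau^\Gamma$ the partial transpose with respect to one party. For a system $k$ of dimension $m$ with orthonormal basis $\{|a^{(k)}_i\rangle\}$, the measurement interaction is the isometry $V_k:k\to k\otimes k'$ ($k'$ an $m$-dimensional apparatus with computational basis $\{|i\rangle\}$), $V_k|a^{(k)}_i\rangle=|a^{(k)}_i\rangle|i\rangle$. The pre-measurement state is $\tilde\rho=(\bigotimes_{k\in\Sigma}V_k)\rho(\bigotimes_{k\in\Sigma}V_k)^\dagger$ on the systems $1,\dots,n$ together with the apparatuses $\Sigma'=\{k':k\in\Sigma\}$. The negativity of quantumness on $\Sigma$ is $Q^\Sigma_{\mathcal N}(\rho)=\min\mathcal N_{\{1,\dots,n\}:\Sigma'}(\tilde\rho)$ over all choices of bases of the systems in $\Sigma$. *)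

From HB Require Import structures.
From mathcomp Require Import all_boot all_order all_algebra.
Unset Printing Implicit Defensive.
Import Order.TTheory GRing.Theory Num.Theory.
Local Open Scope ring_scope.
Local Open Scope sesquilinear_scope.

(* An operator on a finite-dimensional Hilbert space with computational basis
   indexed by the finite type T, given by its matrix entries <x|A|y> = A x y. *)
Definition op (C : numClosedFieldType) (T : finType) := T -> T -> C.

Section Defs.
Context {C : numClosedFieldType}.

Definition tomx {T : finType} (A : op C T) : 'M[C]_#|T| :=
  \matrix_(i, j) A (enum_val i) (enum_val j).

(* Trace norm ||A||_1 = Tr sqrt(A^dagger A) = sum of the square roots of the
   eigenvalues of the positive semidefinite matrix A^dagger A. *)
Definition trnorm {T : finType} (A : op C T) : C :=
  let M := tomx A in
  \sum_(i < #|T|) sqrtC (spectral_diag (M ^t* *m M) 0 i).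

Definition is_state {T : finType} (rho : op C T) : Prop :=
  (forall v : T -> C, 0 <= \sum_x \sum_y (v x)^* * rho x y * v y)
  /\ \sum_x rho x x = 1.

Definition ptrans {X Y : finType} (tau : op C (X * Y)%type) : op C (X * Y)%type :=
  fun a b => tau (a.1, b.2) (b.1, a.2).

Definition negativity {X Y : finType} (tau : op C (X * Y)%type) : C :=
  (trnorm (ptrans tau) - 1) / 2%:R.

Definition sysidx {n : nat} (d : 'I_n -> nat) : finType :=
  {dffun forall k : 'I_n, 'I_(d k)}.

(* Multi-indices on the systems of Sigma (= computational index of the
   apparatuses Sigma'). *)
Definition sigidx {n : nat} (d : 'I_n -> nat) (Sigma : {set 'I_n}) : finType :=
  {dffun forall k : {k : 'I_n | k \in Sigma}, 'I_(d (val k))}.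

Definition compidx {n : nat} (d : 'I_n -> nat) (Sigma : {set 'I_n}) : finType :=
  {dffun forall k : {k : 'I_n | k \notin Sigma}, 'I_(d (val k))}.

(* A choice of bases: for each k, the rows of B k are the basis vectors
   |a^(k)_i>, i.e. <x|a^(k)_i> = B k i x.  Orthonormal bases of the systems
   in Sigma correspond to unitary B k. *)
Definition bases_ok {n : nat} {d : 'I_n -> nat} (Sigma : {set 'I_n})
  (B : forall k : 'I_n, 'M[C]_(d k)) : Prop :=
  forall k, k \in Sigma -> B k \is unitarymx.

(* Matrix of the isometry (tensor_{k in Sigma} V_k) (tensor identity on the
   other systems) from the systems to systems (x) apparatuses:
   entry < x, s | V | y >, where V_k = sum_i |a_i><a_i| (x) |i>_{k'}. *)
Definition meas_iso {n : nat} {d : 'I_n -> nat} (Sigma : {set 'I_n})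
  (B : forall k : 'I_n, 'M[C]_(d k))
  (xs : (sysidx d * sigidx d Sigma)%type) (y : sysidx d) : C :=
  (\prod_(k : {k : 'I_n | k \in Sigma})
      (B (val k) (xs.2 k) (xs.1 (val k)) * (B (val k) (xs.2 k) (y (val k)))^*))
  * (if [forall k : 'I_n, (k \notin Sigma) ==> (xs.1 k == y k)] then 1 else 0).

Definition premeas {n : nat} {d : 'I_n -> nat} (Sigma : {set 'I_n})
  (B : forall k : 'I_n, 'M[C]_(d k)) (rho : op C (sysidx d))
  : op C (sysidx d * sigidx d Sigma)%type :=
  fun a b => \sum_(y : sysidx d) \sum_(y' : sysidx d)
    meas_iso Sigma B a y * rho y y' * (meas_iso Sigma B b y')^*.

Definition rho_block {n : nat} {d : 'I_n -> nat} (Sigma : {set 'I_n})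
  (B : forall k : 'I_n, 'M[C]_(d k)) (rho : op C (sysidx d))
  (i j : sigidx d Sigma) : op C (compidx d Sigma) :=
  fun z z' => \sum_(y : sysidx d) \sum_(y' : sysidx d)
    ((\prod_(k : {k : 'I_n | k \in Sigma}) (B (val k) (i k) (y (val k)))^*)
     * (if [forall k : {k : 'I_n | k \notin Sigma}, y (val k) == z k] then 1 else 0))
    * rho y y'
    * ((\prod_(k : {k : 'I_n | k \in Sigma}) B (val k) (j k) (y' (val k)))
     * (if [forall k : {k : 'I_n | k \notin Sigma}, y' (val k) == z' k] then 1 else 0)).

Definition is_min (P : C -> Prop) (v : C) : Prop :=
  P v /\ (forall w, P w -> v <= w).

(* v = Q^Sigma_N(rho): the minimum over bases of N_{1..n : Sigma'}(rho~). *)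
Definition is_QN {n : nat} {d : 'I_n -> nat} (Sigma : {set 'I_n})
  (rho : op C (sysidx d)) (v : C) : Prop :=
  is_min (fun w => exists B : forall k : 'I_n, 'M[C]_(d k),
            bases_ok Sigma B /\ w = negativity (premeas Sigma B rho)) v.

End Defs.

From HB Require Import structures.
From mathcomp Require Import all_boot all_order all_algebra.
From mathcomp Require Import ring.
Import Order.TTheory GRing.Theory Num.Theory.
Local Open Scope ring_scope.
Local Open Scope sesquilinear_scope.

(* In the product basis |a_t> of the systems in Sigma, the partial transpose of
   the pre-measurement state is A = sum_(s,s') |a_s'><a_s| (x) rho_s's (x) |s><s'|,
   s indexing the apparatuses. By orthonormality of the |a_t>, A^dagger A is block
   diagonal in s, its block s being sum_t |a_t><a_t| (x) rho_st^dagger rho_st.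
   Hence sqrt(A^dagger A) is block diagonal with blocks sum_t |a_t><a_t| (x) |rho_st|,
   and ||A||_1 = Tr sqrt(A^dagger A) = sum_(s,t) ||rho_st||_1. So the negativity of
   the pre-measurement state equals the right-hand side for every choice of bases,
   and the two minima coincide. *)
Section MatrixAbsoluteValue.
Context {C : numClosedFieldType}.

Definition psdmx {N} (S : 'M[C]_N) := forall v : 'cV[C]_N, 0 <= (v^t* *m S *m v) 0 0.

Lemma selfadjoint_normalmx {N} {S : 'M[C]_N} : S^t* = S -> S \is normalmx.
Proof. by move=> hS; apply/normalmxP; rewrite hS. Qed.

Lemma char_poly_similar {N} (P D : 'M[C]_N) : P \in unitmx ->
  char_poly (invmx P *m D *m P) = char_poly D.
Proof.
move=> Pu; rewrite /char_poly /char_poly_mx.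
have Pu' : map_mx polyC P \in unitmx by rewrite map_unitmx.
rewrite !map_mxM map_invmx.
have -> : 'X%:M - invmx (map_mx polyC P) *m map_mx polyC D *m map_mx polyC P
   = invmx (map_mx polyC P) *m ('X%:M - map_mx polyC D) *m map_mx polyC P.
  by rewrite mulmxBr mulmxBl -[in RHS]mulmxA -scalar_mxC mulmxA mulVmx // mul1mx.
rewrite !det_mulmx det_inv mulrC mulrA mulrV ?mul1r // -unitmxE.
Qed.

Lemma char_poly_diag_mx N (d : 'rV[C]_N) :
  char_poly (diag_mx d) = \prod_(x <- [seq d 0 i | i <- enum 'I_N]) ('X - x%:P).
Proof.
rewrite char_poly_trig ?diag_mx_is_trig // big_map big_enum /=.
by apply: eq_bigr => i _; rewrite mxE eqxx mulr1n.
Qed.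

Lemma diag_mx_sqr N (mu : 'rV[C]_N) :
  diag_mx mu *m diag_mx mu = diag_mx (\row_i (mu 0 i ^+ 2)).
Proof.
apply/matrixP => i j; rewrite mul_diag_mx !mxE.
by case: eqP => [->|_]; rewrite ?mulr1n ?mulr0n ?mulr0 // expr2.
Qed.

Lemma normal_spectral_diag {N} {S : 'M[C]_N} : S \is normalmx ->
  spectralmx S *m S *m (spectralmx S)^t* = diag_mx (spectral_diag S).
Proof.
move=> /orthomx_spectralP {2}->.
have Pu := spectral_unitarymx S.
rewrite invmx_unitary // !mulmxA (unitarymxP Pu) mul1mx -mulmxA.
by rewrite (unitarymxP Pu) mulmx1.
Qed.

Lemma psdmx_spectral_diag_ge0 N (S : 'M[C]_N) i :
  S \is normalmx -> psdmx S -> 0 <= spectral_diag S 0 i.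
Proof.
move=> Sn Sp; set v := (row i (spectralmx S))^t*.
have -> : spectral_diag S 0 i = (v^t* *m S *m v) 0 0.
  have /matrixP/(_ i i) := normal_spectral_diag Sn.
  rewrite [RHS]mxE eqxx mulr1n => <-; rewrite /v trmxCK.
  rewrite !mxE; apply: eq_bigr => k _; rewrite !mxE.
  by congr (_ * _); apply: eq_bigr => j _; rewrite mxE.
exact: (Sp v).
Qed.

Lemma psdmx_adjmul N (M : 'M[C]_N) : psdmx (M^t* *m M).
Proof.
move=> v; have -> : v^t* *m (M^t* *m M) *m v = (M *m v)^t* *m (M *m v).
  by rewrite trmx_mul map_mxM !mulmxA.
by rewrite mxE sumr_ge0 // => k _; rewrite !mxE mulrC mul_conjC_ge0.
Qed.

Definition mxabs {N} (M : 'M[C]_N) : 'M[C]_N :=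
  let P := spectralmx (M^t* *m M) in
  P^t* *m diag_mx (\row_i sqrtC (spectral_diag (M^t* *m M) 0 i)) *m P.

Section Mxabs.
Variables (N : nat) (M : 'M[C]_N).
Let P := spectralmx (M^t* *m M).
Let r := \row_i sqrtC (spectral_diag (M^t* *m M) 0 i).

Let adjmul_normal : M^t* *m M \is normalmx.
Proof. by apply: selfadjoint_normalmx; rewrite trmx_mul map_mxM trmxCK. Qed.

Let eig_ge0 i : 0 <= spectral_diag (M^t* *m M) 0 i.
Proof. exact/psdmx_spectral_diag_ge0/psdmx_adjmul/adjmul_normal. Qed.

Let r_conj : map_mx Num.conj r = r.
Proof. by apply/matrixP => i j; rewrite !mxE /= geC0_conj // sqrtC_ge0. Qed.

Lemma mxabs_selfadj : (mxabs M)^t* = mxabs M.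
Proof.
rewrite /mxabs -/P -/r !trmx_mul !map_mxM trmxCK mulmxA.
by rewrite tr_diag_mx map_diag_mx r_conj.
Qed.

Lemma psdmx_mxabs : psdmx (mxabs M).
Proof.
move=> v; have -> : v^t* *m mxabs M *m v = (P *m v)^t* *m diag_mx r *m (P *m v).
  by rewrite /mxabs trmx_mul map_mxM ?trmxCK !mulmxA.
rewrite mul_mx_diag mxE; apply: sumr_ge0 => l _; rewrite !mxE.
by rewrite -mulrA mulrCA mulr_ge0 ?sqrtC_ge0 // mulrC mul_conjC_ge0.
Qed.

Lemma mxabs_sqr : mxabs M *m mxabs M = M^t* *m M.
Proof.
have Pu : P \is unitarymx by apply: spectral_unitarymx.
rewrite /mxabs -/P -/r !mulmxA -[P^t* *m _ *m P *m P^t*]mulmxA (unitarymxP Pu).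
rewrite mulmx1 -[P^t* *m _ *m _]mulmxA diag_mx_sqr.
rewrite [RHS](orthomx_spectralP adjmul_normal) -/P invmx_unitary //.
by congr (_ *m diag_mx _ *m _); apply/matrixP => i j; rewrite !mxE sqrtCK (ord1 i).
Qed.
End Mxabs.

(* The eigenvalues of M^t* M are the squares of the nonnegative ones of S. *)
Lemma sum_sqrt_spectral_diag N (M S : 'M[C]_N) :
  S^t* = S -> psdmx S -> S *m S = M^t* *m M ->
  \sum_i sqrtC (spectral_diag (M^t* *m M) 0 i) = \tr S.
Proof.
move=> hS pS SS; set H := M^t* *m M.
have Sn := selfadjoint_normalmx hS.
have /orthomx_spectralP SQ := Sn.
set Q := spectralmx S in SQ; set mu := spectral_diag S in SQ.
have QU : Q \in unitmx by apply: spectral_unit.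
have HQ : H = invmx Q *m diag_mx (\row_i (mu 0 i ^+ 2)) *m Q.
  rewrite /H -SS {1 2}SQ -diag_mx_sqr.
  by rewrite !mulmxA -[_ *m Q *m invmx Q]mulmxA mulmxV // mulmx1.
have Hsim : char_poly (diag_mx (spectral_diag H)) =
    char_poly (diag_mx (\row_i (mu 0 i ^+ 2))).
  have /orthomx_spectralP HP : H \is normalmx.
    by rewrite /H -SS selfadjoint_normalmx // trmx_mul map_mxM hS.
  by rewrite -(char_poly_similar _ _ (spectral_unit H)) -HP HQ char_poly_similar.
move: Hsim; rewrite !char_poly_diag_mx => /prod_XsubC_eq eig_perm.
rewrite (_ : \sum_i _ = \sum_(x <- [seq spectral_diag H 0 i | i <- enum 'I_N]) sqrtC x);
  last by rewrite big_map big_enum.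
rewrite (perm_big _ eig_perm) big_map big_enum /=.
under eq_bigr do rewrite mxE sqrCK ?psdmx_spectral_diag_ge0 //.
by rewrite [in RHS]SQ mxtrace_mulC mulmxA mulmxV // mul1mx mxtrace_diag.
Qed.
End MatrixAbsoluteValue.

Section Operators.
Context {C : numClosedFieldType} {T : finType}.
Implicit Types (A B S : op C T) (M : 'M[C]_#|T|).

Definition ofmx M : op C T := fun x y => M (enum_rank x) (enum_rank y).
Definition adjop A : op C T := fun x y => (A y x)^*.
Definition mulop A B : op C T := fun x y => \sum_z A x z * B z y.
Definition psdop S := forall v : T -> C, 0 <= \sum_x \sum_y (v x)^* * S x y * v y.

Lemma sum_enum_val (F : T -> C) : \sum_(k < #|T|) F (enum_val k) = \sum_x F x.
Proof.
rewrite [RHS](reindex (@enum_val T predT)) //; apply: onW_bij.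
by exists enum_rank; [apply: enum_valK | apply: enum_rankK].
Qed.

Lemma eq_tomx A B : A =2 B -> tomx A = tomx B.
Proof. by move=> AB; apply/matrixP => i j; rewrite !mxE AB. Qed.

Lemma eq_trnorm A B : A =2 B -> trnorm A = trnorm B.
Proof. by move=> /eq_tomx; rewrite /trnorm => ->. Qed.

Lemma tomx_inj A B : tomx A = tomx B -> A =2 B.
Proof.
move=> /matrixP AB x y; have := AB (enum_rank x) (enum_rank y).
by rewrite !mxE !enum_rankK.
Qed.

Lemma ofmxK M : tomx (ofmx M) = M.
Proof. by apply/matrixP => i j; rewrite mxE /ofmx !enum_valK. Qed.

Lemma tomx_adjop A : tomx (adjop A) = (tomx A)^t*.
Proof. by apply/matrixP => i j; rewrite !mxE. Qed.

Lemma tomx_mulop A B : tomx (mulop A B) = tomx A *m tomx B.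
Proof.
apply/matrixP => i j; rewrite !mxE /mulop -sum_enum_val.
by apply: eq_bigr => k _; rewrite !mxE.
Qed.

Lemma quadform_tomx S (v : T -> C) (w := \col_i v (enum_val i)) :
  \sum_x \sum_y (v x)^* * S x y * v y = (w^t* *m tomx S *m w) 0 0.
Proof.
rewrite exchange_big mxE -sum_enum_val; apply: eq_bigr => k _.
rewrite !mxE big_distrl -sum_enum_val /=; apply: eq_bigr => l _.
by rewrite !mxE.
Qed.

Lemma psdopE S : psdop S <-> psdmx (tomx S).
Proof.
split=> [pS w | pS v]; last by rewrite quadform_tomx.
have := pS (fun x => w (enum_rank x) 0); rewrite quadform_tomx.
suff -> : \col_i w (enum_rank (enum_val i)) 0 = w by [].
by apply/matrixP => i j; rewrite mxE enum_valK (ord1 j).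
Qed.

Lemma trnorm_eq_trace A S : adjop S =2 S -> psdop S ->
  mulop S S =2 mulop (adjop A) A -> trnorm A = \sum_x S x x.
Proof.
move=> hS /psdopE pS SS; rewrite /trnorm (@sum_sqrt_spectral_diag _ _ _ (tomx S)).
- by rewrite /mxtrace -sum_enum_val; apply: eq_bigr => i _; rewrite mxE.
- by rewrite -tomx_adjop; apply: eq_tomx.
- exact: pS.
- by rewrite -tomx_mulop -tomx_adjop -tomx_mulop; apply: eq_tomx.
Qed.

Definition opabs A : op C T := ofmx (mxabs (tomx A)).

Lemma opabs_selfadj A : adjop (opabs A) =2 opabs A.
Proof. by apply: tomx_inj; rewrite tomx_adjop ofmxK mxabs_selfadj. Qed.

Lemma psdop_opabs A : psdop (opabs A).
Proof. by rewrite psdopE ofmxK; apply: psdmx_mxabs. Qed.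

Lemma opabs_sqr A : mulop (opabs A) (opabs A) =2 mulop (adjop A) A.
Proof. by apply: tomx_inj; rewrite !tomx_mulop ofmxK tomx_adjop mxabs_sqr. Qed.

End Operators.

Lemma trnorm_reindex {C : numClosedFieldType} {T T' : finType} (f : T' -> T)
  (A : op C T) : bijective f -> trnorm (fun x y => A (f x) (f y)) = trnorm A.
Proof.
move=> fbij; have [g fK gK] := fbij.
have sum_f (F : T -> C) : \sum_x F x = \sum_x' F (f x').
  by rewrite (reindex f) //; apply: onW_bij.
set S := opabs A.
rewrite (trnorm_eq_trace _ _ (opabs_selfadj A) (psdop_opabs A) (opabs_sqr A)).
rewrite (trnorm_eq_trace _ (fun x y => S (f x) (f y))) -?sum_f //.
- by move=> x y; apply: opabs_selfadj.
- move=> v; have := psdop_opabs A (v \o g); rewrite sum_f.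
  under eq_bigr do rewrite sum_f.
  by under eq_bigr do under eq_bigr do rewrite /= !fK.
- move=> x y; rewrite /mulop /adjop -(sum_f (fun z => S (f x) z * S z (f y))).
  rewrite -(sum_f (fun z => (A z (f x))^* * A z (f y))).
  exact: opabs_sqr.
Qed.

Lemma sum_pair {V : nmodType} {X Y : finType} (F : (X * Y)%type -> V) :
  \sum_p F p = \sum_x \sum_y F (x, y).
Proof. by rewrite pair_big; apply: eq_bigr => -[]. Qed.

Lemma sum_delta_mull {R : pzSemiRingType} {I : finType} (i : I) (F : I -> R) :
  \sum_j (i == j)%:R * F j = F i.
Proof.
rewrite (bigD1 i) //= eqxx mul1r big1 ?addr0 // => j.
by rewrite eq_sym => /negbTE ->; rewrite mul0r.
Qed.

Section BlockDiagonal.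
Context {C : numClosedFieldType} {X Sg : finType}.
Implicit Types K L : Sg -> op C X.

Definition blockdiag K : op C (X * Sg)%type :=
  fun p q => (p.2 == q.2)%:R * K p.2 p.1 q.1.

Lemma eq_blockdiag K L : (forall s, K s =2 L s) -> blockdiag K =2 blockdiag L.
Proof. by move=> KL p q; rewrite /blockdiag KL. Qed.

Lemma adjop_blockdiag K : adjop (blockdiag K) =2 blockdiag (fun s => adjop (K s)).
Proof.
move=> [x s] [y t]; rewrite /adjop /blockdiag /= rmorphM rmorph_nat eq_sym.
by case: eqP => [->|_]; rewrite ?mul0r.
Qed.

Lemma mulop_blockdiag K L :
  mulop (blockdiag K) (blockdiag L) =2 blockdiag (fun s => mulop (K s) (L s)).
Proof.
move=> [x s] [y t]; rewrite /mulop /blockdiag sum_pair exchange_big /=.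
rewrite (eq_bigr (fun r => (s == r)%:R * \sum_z K s x z * ((r == t)%:R * L r z y))).
  by rewrite sum_delta_mull big_distrr; apply: eq_bigr => z _; rewrite mulrCA.
by move=> r _; rewrite big_distrr /=; apply: eq_bigr => z _; rewrite !mulrA.
Qed.

Lemma psdop_blockdiag K : (forall s, psdop (K s)) -> psdop (blockdiag K).
Proof.
move=> psdK v; rewrite sum_pair exchange_big /= sumr_ge0 // => s _.
suff -> : \sum_x \sum_q (v (x, s))^* * blockdiag K (x, s) q * v q =
          \sum_x \sum_y (v (x, s))^* * K s x y * v (y, s) by exact: psdK.
apply: eq_bigr => x _; rewrite sum_pair exchange_big /= (bigD1 s) //=.
rewrite [X in _ + X]big1 ?addr0.
  by apply: eq_bigr => y _; rewrite /blockdiag eqxx mul1r.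
move=> t ts; apply: big1 => y _.
by rewrite /blockdiag /= eq_sym (negbTE ts) mul0r mulr0 mul0r.
Qed.

Lemma blockdiag_trace K : \sum_p blockdiag K p p = \sum_s \sum_x K s x x.
Proof.
rewrite sum_pair exchange_big /=; apply: eq_bigr => s _.
by apply: eq_bigr => x _; rewrite /blockdiag eqxx mul1r.
Qed.

End BlockDiagonal.

Lemma psdop_sum {C : numClosedFieldType} {T I : finType} (F : I -> op C T) :
  (forall i, psdop (F i)) -> psdop (fun x y => \sum_i F i x y).
Proof.
move=> psdF v; rewrite (eq_bigr (fun x => \sum_i \sum_y (v x)^* * F i x y * v y)).
  by rewrite exchange_big /=; apply: sumr_ge0 => i _; apply: psdF.
move=> x _; rewrite exchange_big; apply: eq_bigr => y _.
by rewrite big_distrr big_distrl.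
Qed.

Lemma psdop_rank1_tensor {C : numClosedFieldType} {U O : finType} (b : U -> C)
  (Y : op C O) : psdop Y -> psdop (fun x y => b x.1 * (b y.1)^* * Y x.2 y.2 : C).
Proof.
move=> psdY v; set w := fun o => \sum_u (b u)^* * v (u, o).
suff -> : \sum_x \sum_y (v x)^* * (b x.1 * (b y.1)^* * Y x.2 y.2) * v y =
          \sum_o1 \sum_o2 (w o1)^* * Y o1 o2 * w o2 by apply: psdY.
rewrite sum_pair; under eq_bigr do under eq_bigr do rewrite sum_pair.
under eq_bigr do under eq_bigr do rewrite exchange_big.
rewrite exchange_big; under eq_bigr do rewrite exchange_big.
apply: eq_bigr => o1 _; apply: eq_bigr => o2 _.
rewrite /w rmorph_sum !big_distrl /=; apply: eq_bigr => u1 _.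
rewrite big_distrr /=; apply: eq_bigr => u2 _.
by rewrite rmorphM /= conjCK; ring.
Qed.

Section ProjectorSum.
Context {C : numClosedFieldType} {U O Sg : finType} (a : Sg -> U -> C).
Hypothesis a_ortho : forall s t, \sum_u (a s u)^* * a t u = (s == t)%:R.
Implicit Types X Y : Sg -> op C O.

(* [projsum X] is sum_t |a_t><a_t| (x) X t, where <u|a_t> = a t u. *)
Definition projsum X : op C (U * O)%type :=
  fun x y => \sum_t a t x.1 * (a t y.1)^* * X t x.2 y.2.

Lemma eq_projsum X Y : (forall t, X t =2 Y t) -> projsum X =2 projsum Y.
Proof. by move=> XY x y; apply: eq_bigr => t _; rewrite XY. Qed.

Lemma adjop_projsum X : adjop (projsum X) =2 projsum (fun t => adjop (X t)).
Proof.
move=> x y; rewrite /adjop /projsum rmorph_sum; apply: eq_bigr => t _.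
by rewrite !rmorphM /= conjCK [_^* * _]mulrC.
Qed.

Lemma psdop_projsum X : (forall t, psdop (X t)) -> psdop (projsum X).
Proof. by move=> psdX; apply: psdop_sum => t; apply: psdop_rank1_tensor. Qed.

Lemma mulop_projsum X Y :
  mulop (projsum X) (projsum Y) =2 projsum (fun t => mulop (X t) (Y t)).
Proof.
move=> [x1 x2] [y1 y2]; rewrite /mulop /projsum sum_pair /=.
under eq_bigr do under eq_bigr do rewrite big_distrl /=.
under eq_bigr do under eq_bigr do under eq_bigr do rewrite big_distrr /=.
under eq_bigr do rewrite exchange_big /=.
under eq_bigr do under eq_bigr do rewrite exchange_big /=.
rewrite exchange_big /=; under eq_bigr do rewrite exchange_big /=.
apply: eq_bigr => t _.
rewrite (eq_bigr (fun t' => (t == t')%:R *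
    (a t x1 * (a t' y1)^* * \sum_o X t x2 o * Y t' o y2))) ?sum_delta_mull //.
move=> t' _; rewrite -a_ortho !big_distrl /=; apply: eq_bigr => u _.
rewrite !big_distrr /=; apply: eq_bigr => o _; ring.
Qed.

Lemma projsum_trace X : \sum_x projsum X x x = \sum_t \sum_o X t o o.
Proof.
rewrite sum_pair exchange_big /=; under eq_bigr do rewrite exchange_big /=.
rewrite exchange_big /=; apply: eq_bigr => t _; apply: eq_bigr => o _.
rewrite -big_distrl /=; under eq_bigr do rewrite mulrC.
by rewrite a_ortho eqxx mul1r.
Qed.

End ProjectorSum.

Section BlockOperator.
Context {C : numClosedFieldType} {U O Sg : finType} (a : Sg -> U -> C).
Hypothesis a_ortho : forall s t, \sum_u (a s u)^* * a t u = (s == t)%:R.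
Variable R : Sg -> Sg -> op C O.

(* sum_(s,s') |a_s'><a_s| (x) R s' s (x) |s><s'|, the shape of the partial
   transpose of a pre-measurement state. *)
Definition blockop : op C ((U * O) * Sg)%type :=
  fun p q => a q.2 p.1.1 * (a p.2 q.1.1)^* * R q.2 p.2 p.1.2 q.1.2.

Lemma mulop_adjop_blockop : mulop (adjop blockop) blockop =2
  blockdiag (fun s => projsum a (fun t => mulop (adjop (R s t)) (R s t))).
Proof.
move=> [[u1 o1] s1] [[u2 o2] s2].
rewrite /mulop /adjop /blockdiag /projsum /blockop /= sum_pair /= sum_pair /=.
under eq_bigr do rewrite exchange_big /=.
rewrite exchange_big /=; under eq_bigr do rewrite exchange_big /=.
have sum_u t o : \sum_u (a s1 u * (a t u1)^* * R s1 t o o1)^* *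
                        (a s2 u * (a t u2)^* * R s2 t o o2)
    = (s1 == s2)%:R * (a t u1 * (a t u2)^* * ((R s1 t o o1)^* * R s2 t o o2)).
  rewrite -a_ortho big_distrl /=; apply: eq_bigr => u _.
  by rewrite !rmorphM /= conjCK; ring.
under eq_bigr do under eq_bigr do rewrite sum_u.
case: eqVneq => [<- | _]; last first.
  by rewrite mul0r big1 // => t _; rewrite big1 // => o _; rewrite mul0r.
rewrite mul1r; apply: eq_bigr => t _; rewrite big_distrr; apply: eq_bigr => o _.
by rewrite mul1r.
Qed.

Definition blockabs : op C ((U * O) * Sg)%type :=
  blockdiag (fun s => projsum a (fun t => opabs (R s t))).

Lemma trnorm_blockop : trnorm blockop = \sum_s \sum_t trnorm (R s t).
Proof.
rewrite (trnorm_eq_trace _ blockabs).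
- rewrite blockdiag_trace; apply: eq_bigr => s _; rewrite projsum_trace //.
  apply: eq_bigr => t _; apply/esym/trnorm_eq_trace.
  + exact: opabs_selfadj.
  + exact: psdop_opabs.
  + exact: opabs_sqr.
- move=> p q; rewrite adjop_blockdiag; apply: eq_blockdiag => s x y.
  by rewrite adjop_projsum; apply: eq_projsum => t; apply: opabs_selfadj.
- apply/psdop_blockdiag => s; apply/psdop_projsum => t; exact: psdop_opabs.
- move=> p q; rewrite mulop_blockdiag mulop_adjop_blockop; apply: eq_blockdiag => s x y.
  by rewrite mulop_projsum //; apply: eq_projsum => t; apply: opabs_sqr.
Qed.

End BlockOperator.

Lemma sum_dffun_prod {R : comPzSemiRingType} {I : finType} {T_ : I -> finType}
  (F : forall i, T_ i -> R) :
  \sum_(f : {dffun forall i : I, T_ i}) \prod_i F i (f i) =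
  \prod_i \sum_(t : T_ i) F i t.
Proof.
rewrite (reindex (@dffun_of_fprod I T_)); last exact/onW_bij/dffun_of_fprod_bij.
have /= E := @big_fprod R 0 1 *%R +%R I T_ (fun i => [ffun x => F i x]).
rewrite (eq_bigr (fun t : fprod T_ => \prod_(i in I) [ffun x => F i x] (t i)));
  last first.
  by move=> t _; apply: eq_bigr => i _; rewrite !ffunE.
rewrite E -(bigA_distr_big_dep _ (fun i j => untag 0 [ffun x => F i x] j)).
apply: eq_bigr => i _.
rewrite [RHS](eq_bigr (fun t => [ffun x => F i x] t));
  last by move=> t _; rewrite ffunE.
by rewrite (big_tag (fun i => [ffun x => F i x]) i); apply: eq_bigl.
Qed.

Section Subsystems.
Context {n : nat} {d : 'I_n -> nat} (Sigma : {set 'I_n}).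

Definition projS (x : sysidx d) : sigidx d Sigma := finfun (fun k => x (val k)).
Definition projO (x : sysidx d) : compidx d Sigma := finfun (fun k => x (val k)).
Definition glue (u : sigidx d Sigma) (o : compidx d Sigma) : sysidx d :=
  finfun (fun k => match sumbool_of_bool (k \in Sigma) with
                   | left h => u (exist _ k h)
                   | right h => o (exist _ k (negbT h)) end).

Lemma projS_glue u o : projS (glue u o) = u.
Proof.
apply/ffunP => -[k h]; rewrite !ffunE /=.
case: sumbool_of_bool => [h'|h']; last by exfalso; move: (negbT h'); rewrite h.
by rewrite (bool_irrelevance h' h).
Qed.

Lemma projO_glue u o : projO (glue u o) = o.
Proof.
apply/ffunP => -[k h]; rewrite !ffunE /=.
case: sumbool_of_bool => [h'|h']; first by exfalso; move: h; rewrite h'.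
by rewrite (bool_irrelevance (negbT h') h).
Qed.

Lemma glue_proj x : glue (projS x) (projO x) = x.
Proof.
by apply/ffunP => k; rewrite ffunE; case: sumbool_of_bool => h; rewrite ffunE.
Qed.

Definition prod_basis {C : numClosedFieldType} (B : forall k : 'I_n, 'M[C]_(d k))
  (s u : sigidx d Sigma) : C :=
  \prod_(k : {k : 'I_n | k \in Sigma}) B (val k) (s k) (u k).

Lemma prod_basis_ortho {C : numClosedFieldType} (B : forall k : 'I_n, 'M[C]_(d k)) :
  bases_ok Sigma B -> forall s t,
  \sum_u (prod_basis B s u)^* * prod_basis B t u = (s == t)%:R.
Proof.
move=> hB s t.
have B_ortho (k : {k : 'I_n | k \in Sigma}) (i j : 'I_(d (val k))) :
    \sum_x (B (val k) i x)^* * B (val k) j x = (i == j)%:R.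
  have /unitarymxP/matrixP/(_ j i) := hB _ (valP k).
  by rewrite !mxE eq_sym => <-; apply: eq_bigr => x _; rewrite !mxE mulrC.
under eq_bigr do rewrite /prod_basis rmorph_prod -big_split /=.
rewrite (sum_dffun_prod (fun k x => (B (val k) (s k) x)^* * B (val k) (t k) x)).
under eq_bigr do rewrite B_ortho.
case: eqP => [->|st]; first by apply: big1 => k _; rewrite eqxx.
have [k skt] : exists k, s k != t k.
  apply/existsP; apply: contraR (introN eqP st) => /existsPn st_eq.
  by apply/eqP/ffunP => k; apply/eqP/negPn/st_eq.
by rewrite (bigD1 k) //= (negbTE skt) mul0r.
Qed.

Lemma forall_outside_eqE (x y : sysidx d) :
  [forall k : 'I_n, (k \notin Sigma) ==> (x k == y k)] = (projO x == projO y).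
Proof.
apply/forallP/eqP => [xy|/ffunP xy k].
  by apply/ffunP => -[k hk]; rewrite !ffunE; apply/eqP; exact: (implyP (xy k) hk).
apply/implyP => hk; have := xy (exist _ k hk).
by rewrite !ffunE => ->.
Qed.

Lemma forall_outside_eq_idxE (y : sysidx d) (z : compidx d Sigma) :
  [forall k : {k : 'I_n | k \notin Sigma}, y (val k) == z k] = (projO y == z).
Proof.
apply/forallP/eqP => [yz|<- k]; last by rewrite ffunE.
by apply/ffunP => k; rewrite ffunE; apply/eqP.
Qed.

Section PreMeasurement.
Context {C : numClosedFieldType} (B : forall k : 'I_n, 'M[C]_(d k)).

Lemma meas_isoE x s y : meas_iso Sigma B (x, s) y =
  prod_basis B s (projS x) * (prod_basis B s (projS y))^* * (projO x == projO y)%:R.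
Proof.
rewrite /meas_iso /prod_basis forall_outside_eqE big_split rmorph_prod /=.
congr (_ * _ * _); last by case: eqP.
all: by apply: eq_bigr => k _; rewrite ffunE.
Qed.

Lemma rho_blockE rho i j z z' : rho_block Sigma B rho i j z z' =
  \sum_y \sum_y' ((prod_basis B i (projS y))^* * (projO y == z)%:R) * rho y y'
     * (prod_basis B j (projS y') * (projO y' == z')%:R).
Proof.
apply: eq_bigr => y _; apply: eq_bigr => y' _.
rewrite !forall_outside_eq_idxE /prod_basis rmorph_prod.
congr ((_ * _) * _ * (_ * _)); try by case: eqP.
all: by apply: eq_bigr => k _; rewrite ffunE.
Qed.

Lemma ptrans_premeasE rho x s x' s' :
  ptrans (premeas Sigma B rho) (x, s) (x', s') =
  prod_basis B s' (projS x) * (prod_basis B s (projS x'))^*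
   * rho_block Sigma B rho s' s (projO x) (projO x').
Proof.
rewrite /ptrans /premeas /= rho_blockE big_distrr /=.
apply: eq_bigr => y _; rewrite big_distrr /=; apply: eq_bigr => y' _.
rewrite !meas_isoE !rmorphM /= conjCK rmorph_nat.
by rewrite [projO y == _]eq_sym [projO y' == _]eq_sym; ring.
Qed.

Lemma negativity_premeas rho : bases_ok Sigma B ->
  negativity (premeas Sigma B rho) =
  (\sum_i \sum_j trnorm (rho_block Sigma B rho i j) - 1) / 2%:R.
Proof.
move=> hB; rewrite /negativity -(trnorm_blockop _ (prod_basis_ortho B hB)).
pose f (p : (sysidx d * sigidx d Sigma)%type) := ((projS p.1, projO p.1), p.2).
have f_bij : bijective f.
  exists (fun q => (glue q.1.1 q.1.2, q.2)) => [[x s] | [[u o] s]].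
    by rewrite /f /= glue_proj.
  by rewrite /f /= projS_glue projO_glue.
rewrite -(trnorm_reindex f _ f_bij); congr ((_ - 1) / _).
by apply: eq_trnorm => -[x s] [x' s']; apply: ptrans_premeasE.
Qed.

End PreMeasurement.
End Subsystems.

Lemma eq_is_min {C : numClosedFieldType} (P Q : C -> Prop) v :
  (forall w, P w <-> Q w) -> is_min P v <-> is_min Q v.
Proof. by move=> PQ; split=> -[/PQ Pv minP]; split=> // w /PQ; apply: minP. Qed.

Theorem theorem3 (C : numClosedFieldType) (n : nat) (d : 'I_n -> nat)
  (Sigma : {set 'I_n}) (rho : op C (sysidx d)) :
  (forall k, 0 < d k)%N ->
  Sigma != set0 ->
  is_state rho ->
  forall v : C,
    is_QN Sigma rho v <->
    is_min (fun w => exists B : forall k : 'I_n, 'M[C]_(d k),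
              bases_ok Sigma B /\
              w = (\sum_(i : sigidx d Sigma) \sum_(j : sigidx d Sigma)
                     trnorm (rho_block Sigma B rho i j) - 1) / 2%:R) v.
Proof.
(* The identity holds basis by basis for any operator rho. *)
move=> _ _ _ v; apply: eq_is_min => w.
by split=> -[B [hB ->]]; exists B; split; rewrite // negativity_premeas.
Qed.
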